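(* Let $\mathbf d=(d_1,\ldots,d_n)$ be a degree sequence, $w\in[n]$, and let $V_w\subseteq[n]$ and $\mathbf d_{n,w}=(d_v)_{v\in V_w}$ be as described in the context. Let $\mathcal G_w$ be a random functional graph on vertex set $V_w$ with degree sequence $\mathbf d_{n,w}$, i.e. the graph of a uniformly random $f:V_w\to V_w$ with $|f^{-1}(\{v\})|=d_v$ for all $v\in V_w$. Then an $n$-extension of $\mathcal G_w$ is a random functional graph with degree sequence $\mathbf d$, i.e. it is distributed as the graph of a uniformly random element of $\mathfrak F(\mathbf d)$.
   Context: A degree sequence is $\mathbf d=(d_1,\ldots,d_n)\in\mathbb N_0^n$ with $\sum_j d_j=n$; $\mathfrak F(\mathbf d)=\{f:[n]\to[n]: |f^{-1}(\{i\})|=d_i\ \forall i\}$; the functional graph of $f:V\to V$ has vertex set $V$ and edges $(v,f(v))$. Let $\sigma^2=\frac1n\sum_j d_j^2-1$ and $\hat n=\lfloor (n\sigma^2)^{4/3}\rfloor$. If $\hat n\ge n$, $V_w=[n]$. Otherwise let $v_1,\ldots,v_{n-\hat n}$ be $n-\hat n$ distinct vertices in $[n]\setminus\{w\}$ with $d_{v_i}=1$, chosen by a fixed deterministic rule (such vertices exist), and $V_w=[n]\setminus\{v_1,\ldots,v_{n-\hat n}\}$. ($\sum_{v\in V_w}d_v=|V_w|$.) Given $V'\subseteq[n]$ and a functional graph $G=(V',E')$ on $V'$, an $n$-extension of $G$ is the random graph on $[n]$ produced as follows: start with $V_0=V'$, $E_0=E'$; while $V_i\ne[n]$, let $u$ be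 the smallest element of $[n]\setminus V_i$; with probability $1/(|E_i|+1)$ set $V_{i+1}=V_i\cup\{u\}$, $E_{i+1}=E_i\cup\{(u,u)\}$ (a loop); otherwise choose an edge $(x,y)\in E_i$ uniformly at random and set $V_{i+1}=V_i\cup\{u\}$, $E_{i+1}=(E_i\setminus\{(x,y)\})\cup\{(x,u),(u,y)\}$; all random choices independent. The output is $(V_i,E_i)$ once $V_i=[n]$. *)

From HB Require Import structures.
From mathcomp Require Import all_boot all_order all_algebra.
Set Implicit Arguments. Unset Strict Implicit. Unset Printing Implicit Defensive.
Import Order.TTheory GRing.Theory Num.Theory.

Definition graph (n : nat) := {set ('I_n * 'I_n)}.

Definition graph_on n (V : {set 'I_n}) (f : {ffun 'I_n -> 'I_n}) : graph n :=
  [set (v, f v) | v in V].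

(* f encodes a map V -> V with |f^{-1}(v)| = d v for all v in V;
   outside V, f is normalised to the identity (so encodings are unique). *)
Definition in_F n (V : {set 'I_n}) (d : 'I_n -> nat) (f : {ffun 'I_n -> 'I_n}) : bool :=
  [forall v, if v \in V then (f v \in V) && (#|[set x in V | f x == v]| == d v)
             else f v == v].

Definition fungraph_law n (V : {set 'I_n}) (d : 'I_n -> nat) (E : graph n) : rat :=
  (#|[set f : {ffun 'I_n -> 'I_n} | in_F V d f && (graph_on V f == E)]|%:R
   / #|[set f : {ffun 'I_n -> 'I_n} | in_F V d f]|%:R)%R.

Definition next_vertex n (V : {set 'I_n}) : option 'I_n :=
  [pick i in ~: V | [forall j in ~: V, (i <= j)%N]].

Definition trans n (u : 'I_n) (E E' : graph n) : rat :=
  ((#|E|.+1)%:R^-1 *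
   ((E' == E :|: [set (u, u)])%:R
    + \sum_(e in E) (E' == (E :\ e) :|: [set (e.1, u); (u, e.2)])%:R))%R.

Definition step n (u : 'I_n) (mu : graph n -> rat) : graph n -> rat :=
  fun E' => (\sum_(E : graph n) mu E * trans u E E')%R.

Fixpoint extend_iter n (k : nat) (V : {set 'I_n}) (mu : graph n -> rat) : graph n -> rat :=
  match k with
  | 0 => mu
  | k'.+1 => match next_vertex V with
             | None => mu
             | Some u => extend_iter k' (u |: V) (step u mu)
             end
  end.

(* law of the n-extension of a random graph on V with law mu (n steps suffice) *)
Definition n_extension n (V : {set 'I_n}) (mu : graph n -> rat) : graph n -> rat :=
  extend_iter n V mu.

(* n * sigma^2 = sum_j d_j^2 - n  (a nonnegative integer) *)
Definition nsigma2 n (d : 'I_n -> nat) : nat := ((\sum_j d j ^ 2) - n)%N.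

(* hat n = floor((n sigma^2)^{4/3}) = largest m with m^3 <= (n sigma^2)^4 *)
Definition hatn n (d : 'I_n -> nat) : nat :=
  let x := nsigma2 d in \max_(m < (x ^ 4).+1 | (m ^ 3 <= x ^ 4)%N) (m : nat).

(* V is a valid choice of V_w (for an arbitrary deterministic rule) *)
Definition is_Vw n (d : 'I_n -> nat) (w : 'I_n) (V : {set 'I_n}) : Prop :=
  if (n <= hatn d)%N then V = setT
  else exists S : {set 'I_n},
      [/\ #|S| = (n - hatn d)%N, w \notin S, (forall v, v \in S -> d v = 1%N)
        & V = ~: S].

From HB Require Import structures.
From mathcomp Require Import all_boot all_order all_algebra perm.
From Stdlib Require Import FunctionalExtensionality.
Set Implicit Arguments. Unset Strict Implicit. Unset Printing Implicit Defensive.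
Import Order.TTheory GRing.Theory Num.Theory.

(* Every vertex outside V_w has degree 1.  Adding such a vertex u to a map
   f : V -> V is the same as choosing c in V + {u} and letting u subdivide the
   edge (c, f c) (a loop at u when c = u); since u has exactly one preimage,
   this is a bijection between F(V) x (V + {u}) and F(V + {u}).  One step of
   the extension picks each of the |V| + 1 choices with probability
   1/(|V| + 1), so it maps the uniform law on F(V) to the uniform law on
   F(V + {u}); induction on the number of added vertices concludes. *)

Section InsertVertex.
Variable n : nat.
Implicit Types (u c v x : 'I_n) (V : {set 'I_n}) (d : 'I_n -> nat)
  (f : {ffun 'I_n -> 'I_n}).

(* [f] is assumed to fix [u]; inserting with [c = u] creates the loop at [u]. *)
Definition insert_vertex u c f : {ffun 'I_n -> 'I_n} :=
  [ffun x => if x == c then u else if x == u then f c else f x].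

Definition remove_vertex u c f : {ffun 'I_n -> 'I_n} :=
  [ffun x => if x == u then u else if x == c then f u else f x].

Lemma remove_vertexK u c f : f c = u -> insert_vertex u c (remove_vertex u c f) = f.
Proof.
move=> fc; apply/ffunP => x; rewrite !ffunE.
case: (eqVneq x c) => [->|xc] //; case: (eqVneq x u) => [xu|//].
by rewrite -xu eq_sym (negbTE xc) eqxx.
Qed.

Lemma insert_vertexK u c f : f u = u -> remove_vertex u c (insert_vertex u c f) = f.
Proof.
move=> fu; apply/ffunP => x; rewrite !ffunE.
case: (eqVneq x u) => [->|xu] //; case: (eqVneq x c) => [xc|//].
by rewrite -xc eq_sym (negbTE xu) eqxx.
Qed.

Lemma mem_graph_on V f a b : ((a, b) \in graph_on V f) = (a \in V) && (b == f a).
Proof.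
apply/imsetP/andP => [[x xV [-> ->]] | [aV /eqP ->]]; first by split.
by exists a.
Qed.

Lemma card_graph_on V f : #|graph_on V f| = #|V|.
Proof. by rewrite card_imset // => x y []. Qed.

Lemma mem_notin_neq u V y : u \notin V -> y \in V -> (y == u) = false.
Proof. by move=> uV yV; apply: contraNF uV => /eqP <-. Qed.

Lemma mem_setU1_neq u c V : c \in u |: V -> c != u -> c \in V.
Proof. by rewrite in_setU1 => /orP[/eqP ->|//]; rewrite eqxx. Qed.

Lemma graph_insert_loop u V f : u \notin V -> f u = u ->
  graph_on (u |: V) (insert_vertex u u f) = graph_on V f :|: [set (u, u)].
Proof.
move=> uV fu; apply/setP => -[a b].
rewrite in_setU in_set1 !mem_graph_on in_setU1 ffunE /= xpair_eqE.
by case: (eqVneq a u) => [->|au] /=; rewrite ?(negbTE uV) ?orbF.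
Qed.

Lemma graph_insert_edge u c V f : u \notin V -> c \in V ->
  graph_on (u |: V) (insert_vertex u c f) =
  (graph_on V f :\ (c, f c)) :|: [set (c, u); (u, f c)].
Proof.
move=> uV cV; apply/setP => -[a b].
rewrite in_setU in_setD1 in_set2 !mem_graph_on in_setU1 ffunE /= !xpair_eqE.
case: (eqVneq a c) => [->|ac] /=.
  by rewrite cV (mem_notin_neq uV cV); case: (b == f c); rewrite /= ?orbF ?andbF.
by case: (eqVneq a u) => [->|au] /=; rewrite ?(negbTE uV) ?orbF.
Qed.

Lemma preimset_insert_vertex u c V f v : u \notin V -> c \in u |: V -> v \in V ->
  [set x in u |: V | insert_vertex u c f x == v] =
  tperm c u @^-1: [set x in V | f x == v].
Proof.
move=> uV cV vV; apply/setP => x; rewrite !inE ffunE.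
case: tpermP => [->|->|/eqP/negbTE xc /eqP/negbTE xu].
- by rewrite eqxx (negbTE uV) [u == v]eq_sym (mem_notin_neq uV vV) andbF.
- rewrite eqxx /=; case: (eqVneq u c) => [<-|uc].
    by rewrite (negbTE uV) [u == v]eq_sym (mem_notin_neq uV vV).
  by rewrite (mem_setU1_neq cV) // eq_sym.
- by rewrite xc xu.
Qed.

Lemma preimset_insert_new u c V f : u \notin V ->
  (forall x, x \in V -> f x \in V) -> c \in u |: V ->
  [set x in u |: V | insert_vertex u c f x == u] = [set c].
Proof.
move=> uV fV cV; apply/setP => x; rewrite !inE ffunE.
case: (eqVneq x c) => [->|xc]; first by rewrite eqxx andbT -in_setU1.
case: (eqVneq x u) => [xu|xu] /=.
  by rewrite (mem_notin_neq uV (fV _ (mem_setU1_neq cV _))) // eq_sym -xu.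
by apply/negbTE; rewrite negb_and; case: (boolP (x \in V)) => // /fV /(mem_notin_neq uV) ->.
Qed.

Section InF.
Variables (V : {set 'I_n}) (d : 'I_n -> nat) (f : {ffun 'I_n -> 'I_n}).
Hypothesis Ff : in_F V d f.

Lemma in_F_stable v : v \in V -> f v \in V.
Proof. by move=> vV; move/forallP/(_ v): Ff; rewrite vV => /andP[]. Qed.

Lemma in_F_card v : v \in V -> #|[set x in V | f x == v]| = d v.
Proof. by move=> vV; move/forallP/(_ v): Ff; rewrite vV => /andP[_ /eqP]. Qed.

Lemma in_F_fix v : v \notin V -> f v = v.
Proof. by move=> vV; move/forallP/(_ v): Ff; rewrite (negbTE vV) => /eqP. Qed.

End InF.

Lemma in_F_insert_vertex u c V d f : u \notin V -> d u = 1%N -> in_F V d f ->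
  c \in u |: V -> in_F (u |: V) d (insert_vertex u c f).
Proof.
move=> uV du Ff cV; apply/forallP => v; case: ifP => vV'.
  apply/andP; split.
    rewrite ffunE; case: (eqVneq v c) => [_|vc]; first exact: setU11.
    apply/setU1P; right.
    case: (eqVneq v u) => [vu|vu]; apply: (in_F_stable Ff).
      by apply: (mem_setU1_neq cV); rewrite -vu eq_sym.
    exact: (mem_setU1_neq vV').
  case: (eqVneq v u) => [->|vu].
    by rewrite (preimset_insert_new uV (in_F_stable Ff) cV) cards1 du.
  have vV := mem_setU1_neq vV' vu.
  rewrite (preimset_insert_vertex f uV cV vV) card_preimset ?(in_F_card Ff) //.
  exact: perm_inj.
move/negbT: vV'; rewrite in_setU1 negb_or => /andP[vu vV]; rewrite ffunE.
have vc : v != c by apply: contraNneq vV => vc; rewrite vc (mem_setU1_neq cV) // -vc.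
by rewrite (negbTE vc) (negbTE vu) (in_F_fix Ff).
Qed.

Lemma in_F_remove_vertex u c V d f : u \notin V -> in_F (u |: V) d f ->
  [set x in u |: V | f x == u] = [set c] -> in_F V d (remove_vertex u c f).
Proof.
move=> uV Ff pre.
have : c \in [set x in u |: V | f x == u] by rewrite pre set11.
rewrite inE => /andP[cV /eqP fc].
have fV x : x \in u |: V -> x != c -> f x \in V.
  move=> xV xc; apply: (@mem_setU1_neq u); first exact: (in_F_stable Ff).
  by apply: contra xc => fxu; rewrite -in_set1 -pre inE xV fxu.
apply/forallP => v; case: ifP => vV.
  have vV' : v \in u |: V by rewrite in_setU1 vV orbT.
  apply/andP; split.
    rewrite ffunE (mem_notin_neq uV vV); case: (eqVneq v c) => [vc|]; last exact: fV.
    by apply: fV; [exact: setU11 | rewrite -vc eq_sym (mem_notin_neq uV vV)].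
  rewrite -(in_F_card Ff vV') -{2}(remove_vertexK fc).
  rewrite (preimset_insert_vertex _ uV cV vV) card_preimset //; exact: perm_inj.
rewrite ffunE; case: (eqVneq v u) => [->|vu] //.
have vc : v != c.
  by apply: contraFneq _ vV => vc; apply: (@mem_setU1_neq u) => //; rewrite vc.
by rewrite (negbTE vc) (in_F_fix Ff) // in_setU1 (negbTE vu) vV.
Qed.

Lemma insert_vertex_inj u V d f1 f2 c1 c2 : u \notin V ->
  in_F V d f1 -> in_F V d f2 -> c1 \in u |: V -> c2 \in u |: V ->
  insert_vertex u c1 f1 = insert_vertex u c2 f2 -> c1 = c2 /\ f1 = f2.
Proof.
move=> uV F1 F2 C1 C2 E.
have ec : c1 = c2.
  apply/set1_inj; rewrite -(preimset_insert_new uV (in_F_stable F1) C1).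
  by rewrite -(preimset_insert_new uV (in_F_stable F2) C2) E.
split=> //; rewrite -ec in E.
by rewrite -(insert_vertexK c1 (in_F_fix F1 uV)) -(insert_vertexK c1 (in_F_fix F2 uV)) E.
Qed.

Lemma card_in_F_setU1 u V d (P : pred {ffun 'I_n -> 'I_n}) : u \notin V -> d u = 1%N ->
  #|[set f | in_F (u |: V) d f && P f]| =
  #|[set p in setX [set f | in_F V d f] (u |: V) | P (insert_vertex u p.2 p.1)]|.
Proof.
move=> uV du; set A := [set p in _ | _].
have inj : {in A &, injective (fun p => insert_vertex u p.2 p.1)}.
  move=> [f1 c1] [f2 c2]; rewrite !inE -!in_setU1 /=.
  move=> /andP[/andP[F1 C1] _] /andP[/andP[F2 C2] _].
  by move/(insert_vertex_inj uV F1 F2 C1 C2) => [-> ->].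
rewrite -(card_in_imset inj); apply: eq_card => f; rewrite inE.
apply/andP/imsetP => [[Ff Pf]|[[g c] pA ->]].
  have := in_F_card Ff (setU11 u V); rewrite du => /eqP/cards1P [c pre].
  have : c \in [set x in u |: V | f x == u] by rewrite pre set11.
  rewrite inE => /andP[cV /eqP fc].
  exists (remove_vertex u c f, c); last by rewrite remove_vertexK.
  by rewrite !inE -in_setU1 /= remove_vertexK // Pf cV andbT (in_F_remove_vertex uV Ff pre).
move: pA; rewrite !inE -in_setU1 /= => /andP[/andP[Fg C] Pg]; split => //.
exact: in_F_insert_vertex.
Qed.

Local Open Scope ring_scope.

Lemma sum_natr_pred_card (R : pzSemiRingType) (T : finType) (A : {set T}) (Q : pred T) :
  \sum_(x in A) (Q x)%:R = #|[set x in A | Q x]|%:R :> R.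
Proof.
rewrite -sum1_card natr_sum [RHS]big_mkcond [LHS]big_mkcond.
by apply: eq_bigr => x _; rewrite inE; case: (x \in A); case: (Q x).
Qed.

Lemma step_fungraph_law_avg u V d E' :
  step u (fungraph_law V d) E' =
  #|[set f | in_F V d f]|%:R^-1 * \sum_(f in [set f | in_F V d f]) trans u (graph_on V f) E'.
Proof.
rewrite /step /fungraph_law.
under eq_bigr => E _.
  rewrite (_ : #|_|%:R = \sum_(f in [set f | in_F V d f]) (graph_on V f == E)%:R).
    by rewrite mulrAC mulr_suml; over.
  by rewrite sum_natr_pred_card; congr (_%:R); apply: eq_card => f; rewrite !inE.
rewrite -mulr_suml exchange_big mulrC; congr (_ * _); apply: eq_bigr => f _.
rewrite (bigD1 (graph_on V f)) //= eqxx mul1r big1 ?addr0 // => E.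
by rewrite eq_sym => /negbTE ->; rewrite !mul0r.
Qed.

Lemma trans_graph_on u V d f E' : u \notin V -> in_F V d f ->
  trans u (graph_on V f) E' =
  #|V|.+1%:R^-1 * \sum_(c in u |: V) (graph_on (u |: V) (insert_vertex u c f) == E')%:R.
Proof.
move=> uV Ff; rewrite /trans card_graph_on big_setU1 //=; congr (_ * (_ + _)).
  by rewrite graph_insert_loop ?(in_F_fix Ff) // eq_sym.
rewrite big_imset /=; last by move=> x y _ _ [].
by apply: eq_bigr => v vV; rewrite graph_insert_edge // eq_sym.
Qed.

Lemma step_fungraph_law u V d : u \notin V -> d u = 1%N ->
  step u (fungraph_law V d) =1 fungraph_law (u |: V) d.
Proof.
move=> uV du E'; set F := [set f | in_F V d f].
have cardF' : #|[set f | in_F (u |: V) d f]| = (#|F| * #|V|.+1)%N.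
  have -> : #|V|.+1 = #|u |: V| by rewrite cardsU1 uV.
  transitivity #|[set f | in_F (u |: V) d f && predT f]|.
    by apply: eq_card => f; rewrite !inE andbT.
  by rewrite card_in_F_setU1 // -cardsX; apply: eq_card => p; rewrite !inE andbT.
rewrite step_fungraph_law_avg /fungraph_law cardF' -/F.
under eq_bigr => f.
  rewrite inE => Ff; rewrite (trans_graph_on _ uV Ff).
  over.
rewrite /= -mulr_sumr (card_in_F_setU1 _ uV du) -/F.
rewrite (pair_big_dep (fun f => f \in F) (fun f c => c \in u |: V)
   (fun f c => (graph_on (u |: V) (insert_vertex u c f) == E')%:R)) /=.
rewrite (eq_bigl (fun p => p \in setX F (u |: V))); last by move=> [f c]; rewrite in_setX.
by rewrite sum_natr_pred_card natrM invfM mulrA mulrC.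
Qed.

Lemma next_vertex_None V : next_vertex V = None -> V = setT.
Proof.
rewrite /next_vertex; case: pickP => // noMin _.
apply/setP => x; rewrite inE; apply/negPn/negP => xV.
have exP : exists m, [exists i in ~: V, val i == m].
  by exists (val x); apply/existsP; exists x; rewrite inE xV eqxx.
case: (ex_minnP exP) => m /existsP [i /andP [iV /eqP im]] mmin.
move/negbT/negP: (noMin i); rewrite iV; apply.
apply/forallP => j; apply/implyP => jV; rewrite im; apply: mmin.
by apply/existsP; exists j; rewrite jV eqxx.
Qed.

Lemma next_vertex_Some V u : next_vertex V = Some u -> u \notin V.
Proof.
by rewrite /next_vertex; case: pickP => // x /andP[xV _] [<-]; rewrite inE in xV.
Qed.

Lemma extend_iter_fungraph_law d k V : (forall v, v \notin V -> d v = 1%N) ->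
  (#|~: V| <= k)%N -> extend_iter k V (fungraph_law V d) = fungraph_law setT d.
Proof.
elim: k V => [|k IH] V d1 Vk /=.
  by move: Vk; rewrite leqn0 => /eqP/cards0_eq CV; rewrite -(setCK V) CV setC0.
case E: (next_vertex V) => [u|]; last by rewrite (next_vertex_None E).
have uV := next_vertex_Some E.
rewrite (functional_extensionality _ _ (step_fungraph_law uV (d1 u uV))).
apply: IH => [v|]; first by rewrite in_setU1 negb_or => /andP[_ /d1].
by move: Vk; rewrite (cardsD1 u (~: V)) in_setC uV setCU setIC -setDE.
Qed.

End InsertVertex.

Theorem lemma4p5 (n : nat) (d : 'I_n -> nat) (w : 'I_n) (V : {set 'I_n}) :
  (\sum_(j < n) d j)%N = n ->
  is_Vw d w V ->
  n_extension V (fungraph_law V d) = fungraph_law setT d.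
Proof.
move=> _ HV; apply: extend_iter_fungraph_law; last first.
  by rewrite -[n in (_ <= n)%N]card_ord max_card.
move=> v vV; move: HV; rewrite /is_Vw; case: ifP => _ => [HV|[S [_ _ S1 HV]]].
  by rewrite HV inE in vV.
by apply: S1; rewrite HV inE negbK in vV.
Qed.
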